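(* Let $r>0$, $L\ge2$ with $rL\in\mathbb{N}$, and let $\eta^L\sim\nu_L$, the stationary distribution of the RBB process with $L$ bins and $N=rL$ balls. Writing $w_k(\eta):=\mathbf{1}(\eta_k>0)$, $$\mathrm{Cov}\big(w_1(\eta^L),w_2(\eta^L)\big)=-\mathbb{E}\big(w_1(\eta^L)\big)^2+2\,\mathbb{E}\big(w_1(\eta^L)\big)\frac{(r+1)L-1}{L-1}-2r\frac{L}{L-1}.$$
   Context: RBB process with $L$ bins: Markov chain on $\mathbb{Z}_+^L$; with $w(\eta):=(\mathbf{1}(\eta_1>0),\dots,\mathbf{1}(\eta_L>0))$ and $K(\eta):=\sum_j\mathbf{1}(\eta_j>0)$, from state $\eta$ the next state is $\eta-w(\eta)+B(\eta)$ where $B(\eta)$ is multinomial with $K(\eta)$ trials and cell probabilities $(1/L,\dots,1/L)$. It conserves the total number of balls, and restricted to configurations with $N$ balls it is an ergodic finite Markov chain with a unique stationary distribution $\nu_L$, which is exchangeable. *)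

From HB Require Import structures.
From mathcomp Require Import all_boot all_order all_algebra.
Set Implicit Arguments. Unset Strict Implicit. Unset Printing Implicit Defensive.
Import Order.TTheory GRing.Theory Num.Theory.
Local Open Scope ring_scope.

(* Configurations of the RBB process with L bins and (at most) N balls per bin.
   eta i is the number of balls in bin i (bins indexed 0..L-1).  The stationary
   distribution is supported on configurations with exactly N balls in total,
   where every bin automatically holds at most N balls, so no truncation occurs. *)
Definition config (L N : nat) := {ffun 'I_L -> 'I_N.+1}.

Definition occ (L N : nat) (eta : config L N) (i : 'I_L) : nat := (0 < eta i)%N.

Definition Kocc (L N : nat) (eta : config L N) : nat := (\sum_i occ eta i)%N.

Definition ballsum (L N : nat) (eta : config L N) : nat := (\sum_i (eta i : nat))%N.

(* One-step transition probability: eta' = eta - w(eta) + B with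
   B ~ Multinomial(K(eta); 1/L,...,1/L). *)
Definition rbb_P (R : realFieldType) (L N : nat) (eta eta' : config L N) : R :=
  let b i := ((eta' i : nat) + occ eta i - eta i)%N in
  if [forall i, (eta i : nat) <= eta' i + occ eta i]%N
     && ((\sum_i b i)%N == Kocc eta)
  then (Kocc eta)`!%:R / (\prod_i (b i)`!)%:R / (L%:R ^+ Kocc eta)
  else 0.

Definition rbb_stationary (R : realFieldType) (L N : nat) (pi : config L N -> R) :=
  [/\ forall eta, 0 <= pi eta,
      forall eta, ballsum eta != N -> pi eta = 0,
      \sum_eta pi eta = 1 &
      forall eta', pi eta' = \sum_eta pi eta * rbb_P R eta eta'].

Definition Exp (R : realFieldType) (L N : nat) (pi : config L N -> R)
  (f : config L N -> R) : R := \sum_eta pi eta * f eta.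

From HB Require Import structures.
From mathcomp Require Import all_boot all_order all_algebra.
From mathcomp Require Import fingroup perm.
From mathcomp Require Import zify ring lra.
Set Implicit Arguments. Unset Strict Implicit. Unset Printing Implicit Defensive.
Import Order.TTheory GRing.Theory Num.Theory.
Local Open Scope ring_scope.

(* Under nu_L the second moment of eta_1 is preserved by one step.  Given eta,
   the new content of bin 1 is eta_1 - w_1 + B with B ~ Bin(K, 1/L), so
   E eta_1^2 = E[(eta_1 - w_1 + K/L)^2 + K(L-1)/L^2].  Cancelling E eta_1^2 and
   using w_1^2 = w_1, eta_1 w_1 = eta_1 leaves a linear relation between E w_1,
   E eta_1, E[eta_1 K], E[w_1 K] and E K^2.  The law nu_L is exchangeable: the
   kernel commutes with relabelling the bins, and the stationary law is unique
   because every configuration leads to the one with all balls in a single bin.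
   Exchangeability, sum_i eta_i = N and K = sum_i w_i express all these
   expectations through E w_1 and E[w_1 w_2], which yields the covariance. *)

Section Throws.
Variable L : nat.
Implicit Types (n : nat) (a b : 'I_L).

Definition hits n (f : {ffun 'I_n -> 'I_L}) a : nat := (\sum_k (f k == a))%N.

Definition ffun_cons n a (f : {ffun 'I_n -> 'I_L}) : {ffun 'I_n.+1 -> 'I_L} :=
  [ffun k => if unlift ord0 k is Some j then f j else a].

Lemma ffun_cons0 n a (f : {ffun 'I_n -> 'I_L}) : ffun_cons a f ord0 = a.
Proof. by rewrite ffunE unlift_none. Qed.

Lemma ffun_consS n a (f : {ffun 'I_n -> 'I_L}) j : ffun_cons a f (lift ord0 j) = f j.
Proof. by rewrite ffunE liftK. Qed.

Lemma hits_cons n a (f : {ffun 'I_n -> 'I_L}) b :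
  hits (ffun_cons a f) b = ((a == b) + hits f b)%N.
Proof.
rewrite /hits big_ord_recl ffun_cons0; congr (_ + _)%N.
by apply: eq_bigr => j _; rewrite ffun_consS.
Qed.

Lemma big_ffun_cons (T : Type) (idx : T) (op : Monoid.com_law idx) n
    (F : {ffun 'I_n.+1 -> 'I_L} -> T) :
  \big[op/idx]_f F f = \big[op/idx]_a \big[op/idx]_(g : {ffun 'I_n -> 'I_L}) F (ffun_cons a g).
Proof.
rewrite pair_big /= (reindex (fun p => ffun_cons p.1 p.2)) //.
apply: onW_bij.
exists (fun f : {ffun 'I_n.+1 -> 'I_L} => (f ord0, [ffun j : 'I_n => f (lift ord0 j)])).
  move=> [a g] /=.
  by rewrite ffun_cons0; congr pair; apply/ffunP => j; rewrite ffunE ffun_consS.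
by move=> f; apply/ffunP => k; rewrite ffunE; case: unliftP => [j ->|->]; rewrite ?ffunE.
Qed.

Lemma sum_hits n (f : {ffun 'I_n -> 'I_L}) : (\sum_a hits f a)%N = n.
Proof.
rewrite /hits exchange_big /= -[n in RHS]card_ord -sum1_card.
apply: eq_bigr => k _; rewrite (bigD1 (f k)) //= eqxx big1 // => a.
by rewrite eq_sym => /negPf ->.
Qed.

Lemma hits_cst n a b : hits ([ffun=> a] : {ffun 'I_n -> 'I_L}) b = ((a == b) * n)%N.
Proof.
rewrite /hits (eq_bigr (fun=> (a == b) : nat)) => [|k _]; last by rewrite ffunE.
by rewrite sum_nat_const card_ord mulnC.
Qed.

Lemma multinomial_hits n (b : 'I_L -> nat) : (\sum_a b a)%N = n ->
  ((\sum_(f : {ffun 'I_n -> 'I_L}) [forall a, hits f a == b a]) * \prod_a (b a)`!)%N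
  = n`!.
Proof.
elim: n b => [|n IHn] b sum_b.
  have b0 a : b a = 0%N by apply/eqP; rewrite -leqn0 -sum_b (bigD1 a) //= leq_addr.
  rewrite [X in (_ * X)%N]big1 => [|a _]; last by rewrite b0.
  rewrite muln1 (eq_bigr (fun _ => 1%N)) ?sum1_card ?card_ffun ?card_ord // => f _.
  by apply/eqP; rewrite eqb1; apply/forallP => a; rewrite b0 /hits big_ord0.
rewrite big_ffun_cons big_distrl /= factS -[in (n.+1 * _)%N]sum_b big_distrl /=.
apply: eq_bigr => a _.
case b_a: (b a) => [|m].
  rewrite big1 // => g _; apply/eqP; rewrite eqb0; apply/forallP => /(_ a).
  by rewrite hits_cons b_a eqxx.
pose b' x := (b x - (a == x))%N.
have sum_b' : (\sum_x b' x)%N = n.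
  apply: succn_inj; rewrite -sum_b (bigD1 a) //= [RHS](bigD1 a) //= /b' eqxx b_a.
  rewrite subn1 addSn; congr (_ + _)%N.+1; apply: eq_bigr => x.
  by rewrite eq_sym => /negPf ->; rewrite subn0.
have prod_b : (\prod_x (b x)`! = b a * \prod_x (b' x)`!)%N.
  rewrite (bigD1 a) //= [in RHS](bigD1 a) //= /b' eqxx b_a mulnA subn1 /=.
  by congr (_ * _)%N; apply: eq_bigr => x; rewrite eq_sym => /negPf ->; rewrite subn0.
rewrite prod_b mulnCA -b_a -(IHn _ sum_b'); congr (_ * (_ * _))%N.
apply: eq_bigr => g _; congr nat_of_bool; apply/forallP/forallP => H x; move: (H x);
  rewrite /b' hits_cons; case: (a =P x) => [<-|_] /= /eqP; rewrite ?b_a => ?; apply/eqP; lia.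
Qed.

End Throws.

Section ThrowMoments.
Variables (R : realFieldType) (L : nat).
Hypothesis L_gt0 : (0 < L)%N.

Lemma sum_ffun_cst n (x : R) : \sum_(f : {ffun 'I_n -> 'I_L}) x = x * L%:R ^+ n.
Proof. by rewrite sumr_const card_ffun !card_ord -natrX mulr_natr. Qed.

Lemma sum_sqr_hits n (a : 'I_L) (x : R) :
  \sum_(f : {ffun 'I_n -> 'I_L}) (x + (hits f a)%:R) ^+ 2 =
  L%:R ^+ n * ((x + n%:R / L%:R) ^+ 2 + n%:R * (L%:R - 1) / L%:R ^+ 2).
Proof.
have L_neq0 : L%:R != 0 :> R by rewrite pnatr_eq0 -lt0n.
elim: n x => [|n IHn] x.
  rewrite (eq_bigr (fun _ => x ^+ 2)) => [|f _]; last by rewrite /hits big_ord0 addr0.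
  by rewrite sum_ffun_cst !mul0r !addr0 mul1r mulr1.
rewrite (@big_ffun_cons L R 0 +%R n) /=.
under eq_bigr => b _.
  rewrite (eq_bigr (fun g => (x + (b == a)%:R + (hits g a)%:R) ^+ 2)) => [|g _]; last first.
    by rewrite hits_cons natrD addrA.
  rewrite IHn; over.
rewrite (bigD1 a) //= eqxx (eq_bigr (fun _ => L%:R ^+ n *
   ((x + n%:R / L%:R) ^+ 2 + n%:R * (L%:R - 1) / L%:R ^+ 2))) => [|b /negPf ->]; last first.
  by rewrite addr0.
rewrite sumr_const cardC1 card_ord -[_ *+ L.-1]mulr_natr -subn1 natrB //.
rewrite [L%:R ^+ n.+1]exprS -natr1 /=; move: (L%:R ^+ n) => Ln; field; exact: L_neq0.
Qed.

End ThrowMoments.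

Section Kernel.
Variables (R : realFieldType) (L N : nat).
Implicit Types (eta : config L N) (i : 'I_L).

Definition residual eta i : nat := (eta i - occ eta i)%N.

Lemma occ_le eta i : (occ eta i <= eta i)%N.
Proof. by rewrite /occ; case: (eta i) => [[|m] ?]. Qed.

Lemma sum_residual eta : (\sum_i residual eta i + Kocc eta)%N = ballsum eta.
Proof.
rewrite /Kocc /ballsum -big_split; apply: eq_bigr => i _.
by rewrite /residual /= subnK ?occ_le.
Qed.

Definition rbb_next eta (f : {ffun 'I_(Kocc eta) -> 'I_L}) : config L N :=
  [ffun i => inord (residual eta i + hits f i)].

Lemma rbb_nextE eta (f : {ffun 'I_(Kocc eta) -> 'I_L}) i : ballsum eta = N ->
  (rbb_next f i : nat) = (residual eta i + hits f i)%N.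
Proof.
move=> sum_eta; rewrite ffunE inordK // ltnS.
have sum_next : (\sum_j (residual eta j + hits f j))%N = N.
  by rewrite big_split /= sum_hits sum_residual.
by rewrite -[X in (_ <= X)%N]sum_next (bigD1 i) //= leq_addr.
Qed.

Lemma rbb_next_eq eta (f : {ffun 'I_(Kocc eta) -> 'I_L}) eta' : ballsum eta = N ->
  (rbb_next f == eta') = [forall i, (residual eta i + hits f i)%N == eta' i].
Proof.
move=> sum_eta; apply/eqP/forallP => [<- i | H]; first by rewrite rbb_nextE.
by apply/ffunP => i; apply/val_inj; rewrite /= rbb_nextE //; apply/eqP/H.
Qed.

Lemma rbb_P_count eta eta' : ballsum eta = N ->
  rbb_P R eta eta' = (L%:R ^+ Kocc eta)^-1 *
    (\sum_(f : {ffun 'I_(Kocc eta) -> 'I_L}) (rbb_next f == eta'))%N%:R.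
Proof.
move=> sum_eta; rewrite /rbb_P; case: ifP => [/andP[/forallP le_eta' /eqP sum_b] | not_b].
  rewrite (eq_bigr (fun f => nat_of_bool [forall i, hits f i == (eta' i + occ eta i - eta i)%N]))
    => [|f _]; last first.
    rewrite rbb_next_eq //; congr nat_of_bool; apply/forallP/forallP => H i; apply/eqP;
      by move: (H i) (le_eta' i) (occ_le eta i); rewrite /residual => /eqP; lia.
  rewrite -(multinomial_hits sum_b) natrM mulfK 1?mulrC //.
  by rewrite pnatr_eq0 -lt0n prodn_gt0 // => i; rewrite fact_gt0.
rewrite big1 ?mulr0 // => f _; apply/eqP; rewrite eqb0; apply/eqP => next_f.
have next_fE i : (eta' i : nat) = (residual eta i + hits f i)%N.
  by rewrite -next_f rbb_nextE.
move/negbT: not_b; rewrite negb_and => /orP[/forallPn[i] | /eqP[]].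
  by rewrite next_fE; move: (occ_le eta i); rewrite /residual; lia.
rewrite -[RHS](sum_hits f); apply: eq_bigr => i _.
by rewrite next_fE; move: (occ_le eta i); rewrite /residual; lia.
Qed.

Lemma rbb_P_average eta (h : config L N -> R) : ballsum eta = N ->
  \sum_eta' rbb_P R eta eta' * h eta' =
  (L%:R ^+ Kocc eta)^-1 * \sum_(f : {ffun 'I_(Kocc eta) -> 'I_L}) h (rbb_next f).
Proof.
move=> sum_eta.
under eq_bigr do rewrite rbb_P_count // natr_sum -mulrA mulr_suml.
rewrite -mulr_sumr exchange_big /=; congr (_ * _); apply: eq_bigr => f _.
rewrite (bigD1 (rbb_next f)) //= eqxx mul1r big1 ?addr0 // => e.
by rewrite eq_sym => /negPf ->; rewrite mul0r.
Qed.

Lemma ballsum_rbb_next eta (f : {ffun 'I_(Kocc eta) -> 'I_L}) :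
  ballsum eta = N -> ballsum (rbb_next f) = N.
Proof.
move=> sum_eta; rewrite /ballsum; under eq_bigr do rewrite rbb_nextE //.
by rewrite big_split /= sum_hits sum_residual.
Qed.

Lemma rbb_P_ge0 eta eta' : 0 <= rbb_P R eta eta'.
Proof.
rewrite /rbb_P; case: ifP => // _.
by rewrite !divr_ge0 ?ler0n ?exprn_ge0.
Qed.

Hypothesis L_gt0 : (0 < L)%N.

Lemma rbb_P_sum1 eta : ballsum eta = N -> \sum_eta' rbb_P R eta eta' = 1.
Proof.
move=> sum_eta; under eq_bigr do rewrite -[rbb_P _ _ _]mulr1.
rewrite rbb_P_average // sum_ffun_cst // mul1r mulVf //.
by rewrite expf_neq0 // pnatr_eq0 -lt0n.
Qed.

Lemma rbb_P_next_gt0 eta (f : {ffun 'I_(Kocc eta) -> 'I_L}) :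
  ballsum eta = N -> 0 < rbb_P R eta (rbb_next f).
Proof.
move=> sum_eta; rewrite rbb_P_count // mulr_gt0 ?invr_gt0 ?exprn_gt0 ?ltr0n //.
by rewrite (bigD1 f) //= eqxx.
Qed.

(* Given eta, the new content of bin i is residual eta i + Bin(K(eta), 1/L). *)
Lemma rbb_P_sqr eta i : ballsum eta = N ->
  \sum_eta' rbb_P R eta eta' * (eta' i : nat)%:R ^+ 2 =
  ((residual eta i)%:R + (Kocc eta)%:R / L%:R) ^+ 2
    + (Kocc eta)%:R * (L%:R - 1) / L%:R ^+ 2.
Proof.
move=> sum_eta; rewrite (rbb_P_average (fun e => (e i : nat)%:R ^+ 2)) //.
under eq_bigr do rewrite rbb_nextE // natrD.
by rewrite sum_sqr_hits // mulKf // expf_neq0 // pnatr_eq0 -lt0n.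
Qed.

End Kernel.

Lemma norm_sum_eq_sign (R : realFieldType) (I : finType) (a : I -> R) :
  `|\sum_i a i| = \sum_i `|a i| -> (forall i, 0 <= a i) \/ (forall i, a i <= 0).
Proof.
move=> norm_sum; have [sum_ge0|sum_lt0] := lerP 0 (\sum_i a i); [left|right] => i.
  have gap_ge0 j : true -> 0 <= `|a j| - a j by rewrite subr_ge0 ler_norm.
  have gap0 : \sum_j (`|a j| - a j) = 0 by rewrite sumrB -norm_sum ger0_norm ?subrr.
  by have := psumr_eq0P gap_ge0 gap0 (i := i) isT; have := normr_ge0 (a i); lra.
have gap_ge0 j : true -> 0 <= `|a j| + a j.
  by have := ler_norm (- a j); rewrite normrN; lra.
have gap0 : \sum_j (`|a j| + a j) = 0.
  by rewrite big_split /= -norm_sum ltr0_norm // addNr.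
by have := psumr_eq0P gap_ge0 gap0 (i := i) isT; have := normr_ge0 (a i); lra.
Qed.

Section InvariantMeasure.
Variables (R : realFieldType) (T : finType) (P : T -> T -> R) (S : pred T).
Hypothesis P_ge0 : forall x y, 0 <= P x y.
Hypothesis P_sum1 : forall x, x \in S -> \sum_y P x y = 1.

Variables (step : T -> T) (z : T).
Hypothesis step_S : forall x, x \in S -> step x \in S.
Hypothesis P_step_gt0 : forall x, x \in S -> 0 < P x (step x).
Hypothesis step_hits : forall x, x \in S -> exists n, iter n step x = z.

Definition invariant (mu : T -> R) := forall y, mu y = \sum_x mu x * P x y.

Section Propagation.
Variable mu : T -> R.
Hypotheses (mu_inv : invariant mu) (mu_supp : forall x, x \notin S -> mu x = 0).

(* |mu| is subinvariant with the same total mass, hence invariant: no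
   cancellation occurs in the sum defining mu y. *)
Lemma invariant_norm_sum y : `|\sum_x mu x * P x y| = \sum_x `|mu x * P x y|.
Proof.
have normM x y' : `|mu x * P x y'| = `|mu x| * P x y'.
  by rewrite normrM (ger0_norm (P_ge0 _ _)).
pose gap y' := \sum_x `|mu x| * P x y' - `|mu y'|.
have gap_ge0 y' : true -> 0 <= gap y'.
  move=> _; rewrite /gap subr_ge0 {1}mu_inv; apply: le_trans (ler_norm_sum _ _ _) _.
  by under eq_bigr do rewrite normM.
have gap0 : \sum_y' gap y' = 0.
  rewrite sumrB exchange_big /= -sumrB big1 // => x _.
  rewrite -mulr_sumr; have [/P_sum1 ->|/mu_supp ->] := boolP (x \in S).
    by rewrite mulr1 subrr.
  by rewrite normr0 mul0r subrr.
move: (psumr_eq0P gap_ge0 gap0 (i := y) isT) => /eqP; rewrite subr_eq0 => /eqP gap_y.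
by under [RHS]eq_bigr do rewrite normM; rewrite gap_y -mu_inv.
Qed.

Lemma invariant_gt0_step x y : 0 < mu x -> 0 < P x y -> 0 < mu y.
Proof.
move=> mu_x_gt0 Pxy_gt0; have mu_Pxy_gt0 := mulr_gt0 mu_x_gt0 Pxy_gt0.
have [terms_ge0|terms_le0] := norm_sum_eq_sign (invariant_norm_sum y).
  rewrite mu_inv (bigD1 x) //=; apply: lt_le_trans mu_Pxy_gt0 _.
  by rewrite lerDl sumr_ge0.
by have := terms_le0 x; rewrite leNgt mu_Pxy_gt0.
Qed.

Lemma invariant_gt0_hit x : 0 < mu x -> 0 < mu z.
Proof.
move=> mu_x_gt0; have x_S : x \in S.
  by apply: contraTT mu_x_gt0 => /mu_supp ->; rewrite ltxx.
have [n <-] := step_hits x_S.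
have iter_S k : iter k step x \in S by elim: k => //= k; apply: step_S.
elim: n => //= n IHn; apply: invariant_gt0_step IHn _; exact: P_step_gt0.
Qed.

End Propagation.

Lemma invariant_sum0 (mu : T -> R) :
    invariant mu -> (forall x, x \notin S -> mu x = 0) ->
  \sum_x mu x = 0 -> forall x, mu x = 0.
Proof.
move=> mu_inv mu_supp mu_sum0.
have opp_inv : invariant (fun x => - mu x).
  by move=> y; rewrite mu_inv -sumrN; apply: eq_bigr => x _; rewrite mulNr.
have opp_supp x : x \notin S -> - mu x = 0 by move/mu_supp ->; rewrite oppr0.
have [x /= mu_x_gt0 | mu_le0] := pickP [pred x | 0 < mu x].
  have mu_ge0 y : true -> 0 <= mu y.
    move=> _; rewrite leNgt; apply/negP; rewrite -oppr_gt0.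
    move=> /(invariant_gt0_hit opp_inv opp_supp).
    by have := invariant_gt0_hit mu_inv mu_supp mu_x_gt0; lra.
  by move=> y; apply: (psumr_eq0P mu_ge0 mu_sum0).
have opp_ge0 y : true -> 0 <= - mu y by move=> _; rewrite oppr_ge0 leNgt; apply/negbT/mu_le0.
have opp_sum0 : \sum_x - mu x = 0 by rewrite sumrN mu_sum0 oppr0.
by move=> y; apply/eqP; rewrite -oppr_eq0; apply/eqP/(psumr_eq0P opp_ge0 opp_sum0).
Qed.

Lemma invariant_unique (mu1 mu2 : T -> R) :
    invariant mu1 -> invariant mu2 ->
    (forall x, x \notin S -> mu1 x = 0) -> (forall x, x \notin S -> mu2 x = 0) ->
  \sum_x mu1 x = \sum_x mu2 x -> mu1 =1 mu2.
Proof.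
move=> inv1 inv2 supp1 supp2 sum12 x; apply/eqP; rewrite -subr_eq0; apply/eqP.
apply: (invariant_sum0 (mu := fun x => mu1 x - mu2 x)) => [y | y /[dup] /supp1 -> /supp2 -> |].
- by rewrite inv1 inv2 -sumrB; apply: eq_bigr => x' _; rewrite mulrBl.
- by rewrite subrr.
- by rewrite sumrB sum12 subrr.
Qed.

End InvariantMeasure.

Section Relabel.
Variables (R : realFieldType) (L N : nat).
Implicit Types (eta : config L N) (s : {perm 'I_L}).

Definition relabel s eta : config L N := [ffun i => eta (s i)].

Lemma relabel_inj s : injective (relabel s).
Proof.
move=> eta1 eta2 /ffunP eq12; apply/ffunP => i.
by move: (eq12 (s^-1 i)%g); rewrite !ffunE permKV.
Qed.

Lemma occ_relabel s eta i : occ (relabel s eta) i = occ eta (s i).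
Proof. by rewrite /occ ffunE. Qed.

Lemma Kocc_relabel s eta : Kocc (relabel s eta) = Kocc eta.
Proof.
rewrite /Kocc [RHS](reindex_inj (@perm_inj _ s)) /=.
by apply: eq_bigr => i _; rewrite occ_relabel.
Qed.

Lemma ballsum_relabel s eta : ballsum (relabel s eta) = ballsum eta.
Proof.
rewrite /ballsum [RHS](reindex_inj (@perm_inj _ s)) /=.
by apply: eq_bigr => i _; rewrite ffunE.
Qed.

Lemma rbb_P_relabel s eta eta' : rbb_P R (relabel s eta) (relabel s eta') = rbb_P R eta eta'.
Proof.
have le_relabel : [forall i, (relabel s eta i <= relabel s eta' i + occ (relabel s eta) i)%N]
                = [forall i, (eta i <= eta' i + occ eta i)%N].
  apply/forallP/forallP => le_eta i; last by rewrite !ffunE occ_relabel.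
  by move: (le_eta (s^-1 i)%g); rewrite !ffunE occ_relabel permKV.
have sum_relabel : (\sum_i (relabel s eta' i + occ (relabel s eta) i - relabel s eta i))%N
                 = (\sum_i (eta' i + occ eta i - eta i))%N.
  rewrite [RHS](reindex_inj (@perm_inj _ s)) /=.
  by apply: eq_bigr => i _; rewrite !ffunE occ_relabel.
have prod_relabel :
    (\prod_i (relabel s eta' i + occ (relabel s eta) i - relabel s eta i)`!)%N
  = (\prod_i (eta' i + occ eta i - eta i)`!)%N.
  rewrite [RHS](reindex_inj (@perm_inj _ s)) /=.
  by apply: eq_bigr => i _; rewrite !ffunE occ_relabel.
by rewrite /rbb_P le_relabel sum_relabel prod_relabel Kocc_relabel.
Qed.

Lemma rbb_stationary_relabel s (pi : config L N -> R) :
  rbb_stationary pi -> rbb_stationary (pi \o relabel s).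
Proof.
case=> pi_ge0 pi_supp pi_sum1 pi_inv; split => //=.
- by move=> eta; rewrite -(ballsum_relabel s); apply: pi_supp.
- by rewrite -pi_sum1 [RHS](reindex_inj (@relabel_inj s)).
- move=> eta'; rewrite pi_inv [LHS](reindex_inj (@relabel_inj s)) /=.
  by apply: eq_bigr => eta _; rewrite rbb_P_relabel.
Qed.

End Relabel.

Section Uniqueness.
Variables (R : realFieldType) (L N : nat) (i0 : 'I_L).
Implicit Types eta : config L N.

Definition pile_step eta : config L N :=
  rbb_next ([ffun=> i0] : {ffun 'I_(Kocc eta) -> 'I_L}).

Definition pile : config L N := [ffun i => if i == i0 then ord_max else ord0].

Lemma ballsum_iter_pile_step n eta : ballsum eta = N -> ballsum (iter n pile_step eta) = N.
Proof. by move=> sum_eta; elim: n => //= n; apply: ballsum_rbb_next. Qed.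

Lemma iter_pile_step_neq n eta i : ballsum eta = N -> i != i0 ->
  (iter n pile_step eta i : nat) = (eta i - n)%N.
Proof.
move=> sum_eta /negPf i_neq_i0; elim: n => [|n IHn] /=; first by rewrite subn0.
rewrite rbb_nextE ?ballsum_iter_pile_step // hits_cst eq_sym i_neq_i0 addn0.
by rewrite /residual /occ IHn subnS; lia.
Qed.

Lemma iter_pile_step eta : ballsum eta = N -> iter N pile_step eta = pile.
Proof.
move=> sum_eta; have emptied i : i != i0 -> (iter N pile_step eta i : nat) = 0%N.
  move=> i_neq_i0; rewrite iter_pile_step_neq //; apply/eqP.
  by rewrite subn_eq0 -ltnS ltn_ord.
apply/ffunP => i; apply/val_inj; rewrite ffunE /=.
case: ifP => [/eqP -> | /negbT /emptied //].
move: (ballsum_iter_pile_step N sum_eta); rewrite /ballsum (bigD1 i0) //=.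
by rewrite big1 ?addn0 // => j; apply: emptied.
Qed.

End Uniqueness.

Lemma rbb_stationary_unique (R : realFieldType) (L N : nat) (pi1 pi2 : config L N -> R) :
  (0 < L)%N -> rbb_stationary pi1 -> rbb_stationary pi2 -> pi1 =1 pi2.
Proof.
move=> L_gt0 [_ supp1 sum1 inv1] [_ supp2 sum2 inv2].
apply: (@invariant_unique _ _ (@rbb_P R L N) [pred eta | ballsum eta == N] _ _
  (pile_step (Ordinal L_gt0)) (pile N (Ordinal L_gt0))) => //.
- exact: rbb_P_ge0.
- by move=> eta /eqP; apply: rbb_P_sum1.
- by move=> eta /eqP sum_eta; rewrite inE ballsum_rbb_next.
- by move=> eta /eqP; apply: rbb_P_next_gt0.
- by move=> eta /eqP sum_eta; exists N; apply: iter_pile_step.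
- by rewrite sum1 sum2.
Qed.

Section Expectation.
Variables (R : realFieldType) (L N : nat) (pi : config L N -> R).
Implicit Types f g : config L N -> R.

Lemma eq_Exp f g : f =1 g -> Exp pi f = Exp pi g.
Proof. by move=> fg; apply: eq_bigr => eta _; rewrite fg. Qed.

Lemma ExpD f g : Exp pi (fun eta => f eta + g eta) = Exp pi f + Exp pi g.
Proof. by rewrite /Exp -big_split; apply: eq_bigr => eta _; rewrite mulrDr. Qed.

Lemma ExpZ c f : Exp pi (fun eta => c * f eta) = c * Exp pi f.
Proof. by rewrite /Exp mulr_sumr; apply: eq_bigr => eta _; rewrite mulrCA. Qed.

Lemma Exp_sum (I : finType) (F : I -> config L N -> R) :
  Exp pi (fun eta => \sum_i F i eta) = \sum_i Exp pi (F i).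
Proof. by rewrite /Exp exchange_big; apply: eq_bigr => eta _; rewrite mulr_sumr. Qed.

Hypothesis pi_stat : rbb_stationary pi.

Lemma eq_Exp_ballsum f g : (forall eta, ballsum eta = N -> f eta = g eta) ->
  Exp pi f = Exp pi g.
Proof.
case: pi_stat => _ pi_supp _ _ fg; apply: eq_bigr => eta _.
by have [/fg -> //|/pi_supp ->] := eqVneq (ballsum eta) N; rewrite !mul0r.
Qed.

Lemma Exp_cst c : Exp pi (fun=> c) = c.
Proof. by case: pi_stat => _ _ pi_sum1 _; rewrite /Exp -mulr_suml pi_sum1 mul1r. Qed.

Hypothesis L_gt0 : (0 < L)%N.

(* Exchangeability of nu_L: uniqueness makes pi invariant under relabelling. *)
Lemma Exp_relabel s f : Exp pi (f \o relabel s) = Exp pi f.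
Proof.
have pi_relabel := rbb_stationary_unique L_gt0 (rbb_stationary_relabel s pi_stat) pi_stat.
rewrite [RHS](reindex_inj (@relabel_inj _ _ s)); apply: eq_bigr => eta _.
by rewrite -pi_relabel.
Qed.

Lemma Exp_sum_tperm (F : 'I_L -> config L N -> R) i :
    (forall j eta, F j eta = F i (relabel (tperm i j) eta)) ->
  Exp pi (fun eta => \sum_j F j eta) = L%:R * Exp pi (F i).
Proof.
move=> F_tperm; rewrite Exp_sum (eq_bigr (fun=> Exp pi (F i))) => [|j _].
  by rewrite sumr_const card_ord mulr_natl.
by rewrite (eq_Exp (F_tperm j)) (Exp_relabel _ (F i)).
Qed.

End Expectation.

Section Moments.
Variables (R : realFieldType) (L N : nat) (pi : config L N -> R).
Hypotheses (pi_stat : rbb_stationary pi) (L_gt0 : (0 < L)%N).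
Implicit Types (eta : config L N) (i j : 'I_L).

Definition occR i eta : R := (occ eta i)%:R.
Definition loadR i eta : R := (eta i : nat)%:R.
Definition KoccR eta : R := (Kocc eta)%:R.

Local Notation l := (L%:R : R).

Lemma KoccR_sum eta : KoccR eta = \sum_j occR j eta.
Proof. by rewrite /KoccR /Kocc natr_sum. Qed.

Lemma KoccR_relabel s eta : KoccR (relabel s eta) = KoccR eta.
Proof. by rewrite /KoccR Kocc_relabel. Qed.

Lemma occR_tperm i j eta : occR j eta = occR i (relabel (tperm i j) eta).
Proof. by rewrite /occR occ_relabel tpermL. Qed.

Lemma loadR_tperm i j eta : loadR j eta = loadR i (relabel (tperm i j) eta).
Proof. by rewrite /loadR ffunE tpermL. Qed.

Lemma Exp_occR i j : Exp pi (occR j) = Exp pi (occR i).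
Proof. by rewrite (eq_Exp _ (occR_tperm i j)) (Exp_relabel pi_stat L_gt0 _ (occR i)). Qed.

Lemma Exp_KoccR i : Exp pi KoccR = l * Exp pi (occR i).
Proof. by rewrite (eq_Exp _ KoccR_sum) (Exp_sum_tperm pi_stat L_gt0 (occR_tperm i)). Qed.

Lemma Exp_loadR i : l * Exp pi (loadR i) = N%:R.
Proof.
rewrite -(Exp_sum_tperm pi_stat L_gt0 (loadR_tperm i)) -[RHS](Exp_cst pi_stat).
by apply: eq_Exp_ballsum => // eta <-; rewrite /loadR -natr_sum.
Qed.

Lemma Exp_loadR_KoccR i : l * Exp pi (fun eta => loadR i eta * KoccR eta) = N%:R * Exp pi KoccR.
Proof.
rewrite -[RHS]ExpZ -(Exp_sum_tperm pi_stat L_gt0 (F := fun j eta => loadR j eta * KoccR eta)) //.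
  by apply: eq_Exp_ballsum => // eta <-; rewrite -mulr_suml /loadR -natr_sum.
by move=> j eta; rewrite (loadR_tperm i) KoccR_relabel.
Qed.

Lemma eq_Exp_occR_pair i j j' : j != i -> j' != i ->
  Exp pi (fun eta => occR i eta * occR j eta) = Exp pi (fun eta => occR i eta * occR j' eta).
Proof.
move=> j_neq_i j'_neq_i; rewrite -(Exp_relabel pi_stat L_gt0 (tperm j j')).
by apply: eq_Exp => eta /=; rewrite /occR !occ_relabel tpermL tpermD //.
Qed.

Lemma Exp_occR_KoccR i j : j != i ->
  Exp pi (fun eta => occR i eta * KoccR eta)
  = Exp pi (occR i) + (l - 1) * Exp pi (fun eta => occR i eta * occR j eta).
Proof.
move=> j_neq_i.
rewrite (@eq_Exp _ _ _ pi _ (fun eta => \sum_k occR i eta * occR k eta)) => [|eta]; last first.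
  by rewrite KoccR_sum mulr_sumr.
rewrite Exp_sum (bigD1 i) //=; congr (_ + _).
  by apply: eq_Exp => eta; rewrite /occR -natrM mulnb andbb.
rewrite (eq_bigr (fun=> Exp pi (fun eta => occR i eta * occR j eta))) => [|k k_neq_i].
  by rewrite sumr_const cardC1 card_ord -[_ *+ L.-1]mulr_natl -subn1 natrB.
exact: eq_Exp_occR_pair k_neq_i j_neq_i.
Qed.

Lemma Exp_KoccR_sqr i :
  Exp pi (fun eta => KoccR eta * KoccR eta) = l * Exp pi (fun eta => occR i eta * KoccR eta).
Proof.
rewrite -(Exp_sum_tperm pi_stat L_gt0 (F := fun j eta => occR j eta * KoccR eta)) //.
  by apply: eq_Exp => eta; rewrite {1}KoccR_sum mulr_suml.
by move=> j eta; rewrite (occR_tperm i) KoccR_relabel.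
Qed.

(* Stationarity tested against eta |-> eta_i^2, using rbb_P_sqr. *)
Lemma Exp_loadR_sqr i : Exp pi (fun eta => loadR i eta ^+ 2) =
  Exp pi (fun eta => ((residual eta i)%:R + KoccR eta / l) ^+ 2
                     + KoccR eta * (l - 1) / l ^+ 2).
Proof.
case: (pi_stat) => _ pi_supp _ pi_inv.
rewrite {1}/Exp; under eq_bigr do rewrite pi_inv mulr_suml.
rewrite exchange_big; apply: eq_bigr => eta _ /=.
have [sum_eta|/pi_supp ->] := eqVneq (ballsum eta) N; last first.
  by rewrite mul0r big1 // => eta' _; rewrite !mul0r.
by under eq_bigr do rewrite -mulrA; rewrite -mulr_sumr rbb_P_sqr.
Qed.

Lemma Exp_occR_pair i j : j != i ->
  (l - 1) * Exp pi (fun eta => occR i eta * occR j eta)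
  = 2 * Exp pi (occR i) * (N%:R + l - 1) - 2 * N%:R.
Proof.
move=> j_neq_i; have l_neq0 : l != 0 by rewrite pnatr_eq0 -lt0n.
have expand eta : ((residual eta i)%:R + KoccR eta / l) ^+ 2 + KoccR eta * (l - 1) / l ^+ 2
    = loadR i eta ^+ 2 + (-2) * loadR i eta + occR i eta
      + (2 / l) * (loadR i eta * KoccR eta) + (- (2 / l)) * (occR i eta * KoccR eta)
      + ((l - 1) / l ^+ 2) * KoccR eta + (1 / l ^+ 2) * (KoccR eta * KoccR eta).
  have -> : (residual eta i)%:R = loadR i eta - occR i eta by rewrite natrB ?occ_le.
  have loadR_occR : loadR i eta * occR i eta = loadR i eta.
    by rewrite /loadR /occR /occ; case: (eta i) => -[|n] ? /=; rewrite ?mulr0 ?mulr1.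
  have occR_idem : occR i eta * occR i eta = occR i eta.
    by rewrite /occR -natrM mulnb andbb.
  move: loadR_occR occR_idem; move: (loadR i eta) (occR i eta) (KoccR eta) => x w k xw ww.
  rewrite -[X in _ = _ + -2 * X + _ + _ + _ + _ + _]xw -[X in _ = _ + _ + X + _ + _ + _ + _]ww.
  by field.
have Exp_load : Exp pi (loadR i) = N%:R / l by rewrite -(Exp_loadR i) mulrAC divff ?mul1r.
have Exp_load_K : Exp pi (fun eta => loadR i eta * KoccR eta) = N%:R * Exp pi (occR i).
  by apply: (mulfI l_neq0); rewrite Exp_loadR_KoccR (Exp_KoccR i) mulrCA.
have := Exp_loadR_sqr i; rewrite (eq_Exp _ expand) !ExpD !ExpZ.
rewrite Exp_load Exp_load_K (Exp_KoccR_sqr i) (Exp_occR_KoccR j_neq_i) (Exp_KoccR i).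
move=> /(congr1 (fun x => x - Exp pi (fun eta => loadR i eta ^+ 2))); rewrite subrr => h0.
apply/eqP; rewrite -subr_eq0; apply/eqP; rewrite -[RHS](mulr0 (- l)) h0.
by field.
Qed.

End Moments.

Unset Implicit Arguments.

Theorem mainTheorem8 (R : realFieldType) (L N : nat) (r : R)
  (hL : (2 <= L)%N) (hr : 0 < r) (hrL : r * L%:R = N%:R)
  (i1 i2 : 'I_L) (hi1 : val i1 = 0%N) (hi2 : val i2 = 1%N)
  (pi : config L N -> R) (hpi : rbb_stationary pi) :
  let w1 := fun eta : config L N => (occ eta i1)%:R : R in
  let w2 := fun eta : config L N => (occ eta i2)%:R : R in
  Exp pi (fun eta => w1 eta * w2 eta) - Exp pi w1 * Exp pi w2
  = - (Exp pi w1) ^+ 2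
    + 2 * Exp pi w1 * (((r + 1) * L%:R - 1) / (L%:R - 1))
    - 2 * r * (L%:R / (L%:R - 1)).
Proof.
move=> w1 w2; have L_gt0 : (0 < L)%N by apply: leq_trans hL.
have l1_neq0 : L%:R - 1 != 0 :> R by rewrite subr_eq0 pnatr_eq1 gtn_eqF.
have i2_neq_i1 : i2 != i1 by apply/eqP => /(congr1 val); rewrite hi1 hi2.
have Exp_w2 : Exp pi w2 = Exp pi w1 := Exp_occR hpi L_gt0 i1 i2.
have Exp_w12 : Exp pi (fun eta => w1 eta * w2 eta)
    = (2 * Exp pi w1 * (N%:R + L%:R - 1) - 2 * N%:R) / (L%:R - 1).
  by rewrite -(Exp_occR_pair hpi L_gt0 i2_neq_i1) mulrAC divff ?mul1r.
rewrite Exp_w12 Exp_w2 -hrL.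
by field.
Qed.
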